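(* Let $\lambda>0$ and let $(B,D)$ be a random pair as in the context. If $\lambda\mathbf E[B1_{\{D=\infty\}}]<1$, $\mathbf E[\min\{B,D\}]<\infty$ and $\rho=\lambda\mathbf E[B]>1$, then the equation $z_\infty=\lambda\mathbf E[\min\{z_\infty B,D\}]$ has a unique solution $z_\infty\in(0,\infty)$.
   Context: $(B,D)$ is a random pair with values in $[0,\infty]^2$ whose law $\vartheta$ satisfies $\vartheta(\{0\}\times[0,\infty])=\vartheta([0,\infty]\times\{0\})=\vartheta(\{(\infty,\infty)\})=0$; arithmetic on $[0,\infty]$ with $x\cdot\infty=\infty$ for $x>0$. *)

From HB Require Import structures.
From mathcomp Require Import all_boot all_order all_algebra.
From mathcomp Require Import all_classical all_reals all_analysis.
From mathcomp Require Import measurable_realfun lebesgue_integral probability.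
Set Implicit Arguments. Unset Strict Implicit. Unset Printing Implicit Defensive.
Import Order.TTheory GRing.Theory Num.Theory.

Local Open Scope classical_set_scope.
Local Open Scope ring_scope.
Local Open Scope ereal_scope.

Definition admissible_pair d (T : measurableType d) (R : realType)
  (P : probability T R) (B D : T -> \bar R) : Prop :=
  measurable_fun setT B /\ measurable_fun setT D /\
  (forall w, 0 <= B w) /\ (forall w, 0 <= D w) /\
  P [set w | B w = 0] = 0 /\ P [set w | D w = 0] = 0 /\
  P [set w | B w = +oo /\ D w = +oo] = 0.

From HB Require Import structures.
From mathcomp Require Import all_boot all_order all_algebra.
From mathcomp Require Import all_classical all_reals all_analysis.
From mathcomp Require Import measurable_realfun lebesgue_integral probability.
From mathcomp Require Import lra.
Set Implicit Arguments. Unset Strict Implicit. Unset Printing Implicit Defensive.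
Import Order.TTheory GRing.Theory Num.Theory.
Import numFieldNormedType.Exports.
Local Open Scope classical_set_scope.
Local Open Scope ring_scope.

(* Since min(zB, D) = z min(B, D/z), the equation says m(1/z) = 1/lambda for
   m(t) := E[min(B, tD)].  On (0, oo) the function m is finite, nondecreasing and
   concave, and m(t)/t is nonincreasing; monotonicity together with the decrease
   of m(t)/t makes m locally Lipschitz, hence continuous.  By dominated
   convergence m(t) tends to E[B 1_{D = oo}] < 1/lambda as t -> 0, and by
   monotone convergence, since D > 0 a.s., m(t) tends to E[B] > 1/lambda as
   t -> oo, so the intermediate value theorem gives a solution.  It is unique
   because a concave nondecreasing function taking the same value at two points
   is constant from the second one on, whereas m eventually exceeds 1/lambda. *)

Section concave_nondecreasing.
Variables (R : realType) (k : R -> R).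
Hypothesis k_nd : forall t s : R, 0 < t -> t <= s -> k t <= k s.
Hypothesis k_ratio : forall t s : R, 0 < t -> t <= s -> t * k s <= s * k t.
Hypothesis k_concave : forall a b c : R, 0 < a -> a <= b -> b <= c ->
  (b - a) * k c + (c - b) * k a <= (c - a) * k b.

Lemma concave_nd_ge0 (t : R) : 0 < t -> 0 <= k t.
Proof.
move=> t0; have t1 : t <= t + 1 by lra.
have := k_ratio t0 t1; have := k_nd t0 t1; nra.
Qed.

Lemma concave_nd_dist_le (a t s : R) : 0 < a -> a <= t -> a <= s ->
  `|k t - k s| <= `|t - s| * (k a / a).
Proof.
move=> a0; wlog ts : t s / t <= s => [hwlog ta sa|ta sa].
  have [/hwlog|/ltW /hwlog] := leP t s; first exact.
  by rewrite distrC (distrC t); apply.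
have t0 : 0 < t by exact: lt_le_trans ta.
rewrite distrC (distrC t) !ger0_norm ?subr_ge0 ?k_nd // mulrA ler_pdivlMr //.
have := k_ratio t0 ts; have := k_ratio a0 ta; nra.
Qed.

Lemma concave_nd_continuous (x : R) : 0 < x -> {for x, continuous k}.
Proof.
move=> x0; have [a a0 a2x] : exists2 a : R, 0 < a & a + a <= x.
  by exists (x / 2); [rewrite divr_gt0 | lra].
have [L L0 kL] : exists2 L : R, 0 <= L &
    forall t s, a <= t -> a <= s -> `|k t - k s| <= `|t - s| * L.
  exists (k a / a); first by rewrite divr_ge0 ?concave_nd_ge0 ?ltW.
  by move=> t s; apply: concave_nd_dist_le.
apply/cvgrPdist_le => e e0; apply/nbhs_normP.
exists (Num.min a (e / (L + 1))); first by rewrite /= lt_min a0 divr_gt0 //; lra.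
move=> y /=; rewrite lt_min ltr_pdivlMr; last lra.
rewrite ltr_distlC => /andP[/andP[xya _] xye].
apply: (le_trans (kL _ _ _ _)); [lra | lra |].
have := normr_ge0 (x - y); nra.
Qed.

Lemma concave_nd_ivt (t0 t1 c : R) : 0 < t0 -> t0 <= t1 ->
  k t0 <= c -> c <= k t1 -> exists2 t, t0 <= t & k t = c.
Proof.
move=> t00 t01 kt0 kt1.
have kcont : {within `[t0, t1], continuous k}.
  apply: continuous_in_subspaceT => t; rewrite inE /= in_itv /= => /andP[t0t _].
  exact/concave_nd_continuous/(lt_le_trans t00).
have [|t] := @IVT _ k _ _ c t01 kcont.
  by rewrite (min_idPl (k_nd t00 t01)) (max_idPr (k_nd t00 t01)) kt0 kt1.
by rewrite in_itv /= => /andP[t0t _] kt; exists t.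
Qed.

Lemma concave_nd_eq_const (a b m : R) : 0 < a -> a < b -> b <= m ->
  k a = k b -> k m = k b.
Proof.
move=> a0 ab bm kab; have b0 : 0 < b by exact: lt_trans ab.
have := k_concave a0 (ltW ab) bm; have := k_nd b0 bm; rewrite kab; nra.
Qed.

Lemma concave_nd_level_unique (t0 t1 c : R) : 0 < t0 -> 0 < t1 ->
  k t0 <= c -> c < k t1 -> exists! t, 0 < t /\ k t = c.
Proof.
move=> t00 t10 kt0 kt1.
have t01 : t0 <= t1 by rewrite leNgt; apply/negP => /ltW /(k_nd t10); lra.
have [t t0t kt] := concave_nd_ivt t00 t01 kt0 (ltW kt1).
have t_gt0 : 0 < t by exact: lt_le_trans t0t.
have not_two_levels a b : 0 < a -> a < b -> k a = c -> k b = c -> False.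
  move=> a0 ab ka kb; have b0 : 0 < b by exact: lt_trans ab.
  have bm : b <= Num.max b t1 by rewrite le_max lexx.
  have t1m : t1 <= Num.max b t1 by rewrite le_max lexx orbT.
  have := concave_nd_eq_const a0 ab bm; have := k_nd t10 t1m; lra.
exists t; split => // s [s0 ks].
by case: (ltgtP s t) => // [st|ts];
  [case: (not_two_levels s t) | case: (not_two_levels t s)].
Qed.

End concave_nondecreasing.

Local Open Scope ereal_scope.

Section cvge_exists.
Variable R : realType.

Lemma cvge_lt_exists (u : nat -> \bar R) (l c : \bar R) :
  u @ \oo --> l -> l < c -> exists n, u n < c.
Proof.
move=> ul lc.
have [N _ uN] := ul _ (open_nbhs_nbhs (conj (@open_ereal_lt_ereal _ c) lc)).
by exists N; exact: (uN N (leqnn N)).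
Qed.

Lemma cvge_gt_exists (u : nat -> \bar R) (l c : \bar R) :
  u @ \oo --> l -> c < l -> exists n, c < u n.
Proof.
move=> ul cl.
have [N _ uN] := ul _ (open_nbhs_nbhs (conj (@open_ereal_gt_ereal _ c) cl)).
by exists N; exact: (uN N (leqnn N)).
Qed.

End cvge_exists.

Section mine_scale.
Variables (R : realType) (x y : \bar R).
Hypotheses (x0 : 0 <= x) (y0 : 0 <= y).

Lemma mine_scale_ge0 (t : R) : (0 <= t)%R -> 0 <= mine x (t%:E * y).
Proof. by move=> t0; rewrite le_min x0 mule_ge0. Qed.

Lemma mine_scale_nd (t s : R) : (t <= s)%R -> mine x (t%:E * y) <= mine x (s%:E * y).
Proof.
by move=> ts; rewrite le_min ge_min lexx /= ge_min lee_wpmul2r ?lee_fin ?orbT.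
Qed.

Lemma mine_scale_ratio (t s : R) : (0 < t)%R -> (t <= s)%R ->
  t%:E * mine x (s%:E * y) <= s%:E * mine x (t%:E * y).
Proof.
move=> t0 ts; have s0 : (0 < s)%R by exact: lt_le_trans ts.
rewrite !mine_pMr ?lee_fin ?(ltW t0) ?(ltW s0) // !muleA -!EFinM (mulrC s t).
by rewrite le_min !ge_min lexx !orbT andbT lee_wpmul2r ?lee_fin.
Qed.

Lemma mine_scale_concave (a b c : R) : (0 < a)%R -> (a <= b)%R -> (b <= c)%R ->
  (b - a)%:E * mine x (c%:E * y) + (c - b)%:E * mine x (a%:E * y)
  <= (c - a)%:E * mine x (b%:E * y).
Proof.
move=> a0 ab bc; have b0 : (0 < b)%R by exact: lt_le_trans ab.
have c0 : (0 < c)%R by exact: lt_le_trans bc.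
case: y y0 => [s|_|//]; last first.
  rewrite !gt0_muley ?lte_fin // !miney.
  case: x x0 => [r r0|_|//]; first by rewrite -!EFinM -EFinD lee_fin; lra.
  have [ca|ac] := eqVneq c a.
    have ba : b = a by apply/le_anti; rewrite ab -ca bc.
    by rewrite ba ca subrr !mul0e adde0.
  have ca0 : (0 < c - a)%R by rewrite subr_gt0 lt_neqAle eq_sym ac (le_trans ab bc).
  by rewrite [leRHS]gt0_muley ?lte_fin ?leey.
rewrite lee_fin => s0; case: x x0 => [r|_|//]; last first.
  by rewrite -!EFinM -EFinD lee_fin; lra.
rewrite lee_fin => r0; rewrite -!EFinM -!EFin_min -!EFinM -EFinD lee_fin.
have min_le (u : R) : (Num.min r (u * s) <= r /\ Num.min r (u * s) <= u * s)%R.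
  by rewrite !ge_min !lexx ?orbT.
have [mcr mcs] := min_le c; have [mar mas] := min_le a.
have ba : (0 <= b - a)%R by rewrite subr_ge0.
have cb : (0 <= c - b)%R by rewrite subr_ge0.
by case: (leP r (b * s)%R) => h; nra.
Qed.

Lemma cvg_mine_scale0 :
  mine x ((n.+1%:R^-1)%:E * y) @[n --> \oo] --> (if y == +oo then x else 0).
Proof.
case: y y0 => [s s0|_|//]; last first.
  rewrite eqxx; under eq_fun do rewrite gt0_muley ?lte_fin ?invr_gt0 // miney.
  exact: cvg_cst.
have s_cvg0 : (n.+1%:R^-1)%:E * s%:E @[n --> \oo] --> 0.
  by rewrite -(mul0e s%:E); apply: cvgeZr => //; exact: cvge_harmonic.
apply: (squeeze_cvge _ (cvg_cst 0) s_cvg0); apply: nearW => n.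
by rewrite le_min x0 mule_ge0 ?lee_fin ?invr_ge0 //= ge_min lexx orbT.
Qed.

Lemma cvg_mine_scaley : 0 < y -> mine x (n.+1%:R%:E * y) @[n --> \oo] --> x.
Proof.
move=> y_gt0; have scale_ge (A : R) : \forall n \near \oo, A%:E <= n.+1%:R%:E * y.
  case: y y_gt0 => [s||//]; last by move=> _; near=> n; rewrite gt0_muley ?leey.
  rewrite lte_fin => s0; near=> n; rewrite -EFinM lee_fin -ler_pdivrMr //.
  apply: (@le_trans _ _ n%:R); last by rewrite ler_nat.
  by near: n; exact: nbhs_infty_ger.
case: x x0 => [r _|_|//].
  by apply: cvg_near_cst; near=> n; apply/min_idPl; near: n; exact: scale_ge.
by apply/cvgeyPge => A; near=> n; rewrite minye; near: n; exact: scale_ge.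
Unshelve. all: by end_near.
Qed.

End mine_scale.

Section mean_min.
Context d (T : measurableType d) (R : realType) (mu : {measure set T -> \bar R}).
Variables (B D : T -> \bar R).
Hypotheses (mB : measurable_fun setT B) (mD : measurable_fun setT D).
Hypotheses (B0 : forall w, 0 <= B w) (D0 : forall w, 0 <= D w).

Definition mean_min (t : R) := \int[mu]_w mine (B w) (t%:E * D w).

Let measurable_mine_scale (t : R) :
  measurable_fun setT (fun w => mine (B w) (t%:E * D w)).
Proof. exact/measurable_mine/measurable_funeM. Qed.

Let mine_scale_nneg (t : R) : (0 <= t)%R ->
  forall w, setT w -> 0 <= mine (B w) (t%:E * D w).
Proof. by move=> t0 w _; exact: mine_scale_ge0. Qed.

Lemma mean_min_ge0 (t : R) : (0 <= t)%R -> 0 <= mean_min t.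
Proof. by move=> t0; apply: integral_ge0; exact: mine_scale_nneg. Qed.

Lemma mean_min_nd (t s : R) : (0 <= t)%R -> (t <= s)%R -> mean_min t <= mean_min s.
Proof.
move=> t0 ts; apply: ge0_le_integral => //; first exact: mine_scale_nneg.
by move=> w _; exact: mine_scale_nd.
Qed.

Lemma mean_min_ratio (t s : R) : (0 < t)%R -> (t <= s)%R ->
  t%:E * mean_min s <= s%:E * mean_min t.
Proof.
move=> t0 ts; have t0' := ltW t0; have s0 : (0 <= s)%R by exact: le_trans ts.
rewrite -!ge0_integralZl_EFin //; try exact: mine_scale_nneg.
apply: ge0_le_integral => //; [|exact: measurable_funeM|exact: measurable_funeM|].
- by move=> w _; rewrite mule_ge0 ?mine_scale_nneg.
- by move=> w _; exact: mine_scale_ratio.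
Qed.

Lemma mean_min_concave (a b c : R) : (0 < a)%R -> (a <= b)%R -> (b <= c)%R ->
  (b - a)%:E * mean_min c + (c - b)%:E * mean_min a <= (c - a)%:E * mean_min b.
Proof.
move=> a0 ab bc; have a0' := ltW a0; have b0 : (0 <= b)%R by exact: le_trans ab.
have c0 : (0 <= c)%R by rewrite (le_trans b0).
have ba : (0 <= b - a)%R by rewrite subr_ge0.
have cb : (0 <= c - b)%R by rewrite subr_ge0.
have ca : (0 <= c - a)%R by rewrite subr_ge0 (le_trans ab).
rewrite -!ge0_integralZl_EFin //; try exact: mine_scale_nneg.
have scaled_nneg (u v : R) : (0 <= u)%R -> (0 <= v)%R ->
    forall w, setT w -> 0 <= u%:E * mine (B w) (v%:E * D w).
  by move=> u0 v0 w _; rewrite mule_ge0 ?mine_scale_nneg.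
rewrite -ge0_integralD //; [|exact: scaled_nneg|exact: measurable_funeM|
                             exact: scaled_nneg|exact: measurable_funeM].
apply: ge0_le_integral => //.
- by move=> w _; rewrite adde_ge0 ?scaled_nneg.
- by apply: emeasurable_funD; exact: measurable_funeM.
- exact: measurable_funeM.
- by move=> w _; exact: mine_scale_concave.
Qed.

Lemma integral_mine_scaleB (z : R) : (0 < z)%R ->
  \int[mu]_w mine (z%:E * B w) (D w) = z%:E * mean_min z^-1.
Proof.
move=> z0; rewrite -ge0_integralZl_EFin ?(ltW z0) //; last first.
  by apply: mine_scale_nneg; rewrite invr_ge0 ltW.
apply: eq_integral => w _.
by rewrite mine_pMr ?lee_fin ?(ltW z0) // muleA -EFinM mulfV ?gt_eqF // mul1e.
Qed.

Lemma mean_min_cvgy : mu [set w | D w = 0] = 0 ->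
  mean_min n.+1%:R @[n --> \oo] --> \int[mu]_w B w.
Proof.
move=> D0_null.
have min_nd w : setT w -> nondecreasing_seq (fun n => mine (B w) (n.+1%:R%:E * D w)).
  by move=> _ m n mn; apply: mine_scale_nd => //; rewrite ler_nat ltnS.
have := @cvg_monotone_convergence _ _ _ mu _ measurableT _
  (fun n => measurable_mine_scale n.+1%:R) (fun n => mine_scale_nneg (ler0n _ n.+1))
  min_nd.
set lim_min := (fun w => limn _).
suff -> : \int[mu]_w lim_min w = \int[mu]_w B w by [].
have lim_minE w : D w != 0 -> lim_min w = B w.
  move=> Dw; apply/cvg_lim => //; apply: (cvg_mine_scaley (B0 w)).
  by rewrite lt0e Dw D0.
apply: ae_eq_integral => //.
- apply: (emeasurable_fun_cvg _ _ (fun n => measurable_mine_scale n.+1%:R)) => w _.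
  exact: ereal_nondecreasing_is_cvgn (min_nd w I).
- exists [set w | D w = 0]; split => //; last first.
    by move=> w /= Hw; apply: contrapT => /eqP Dw; apply: Hw => _; exact: lim_minE.
  by have := mD measurableT (emeasurable_set1 0); rewrite setTI.
Qed.

Lemma mean_min_gt_neary (c : \bar R) : mu [set w | D w = 0] = 0 ->
  c < \int[mu]_w B w -> exists2 t, (0 < t)%R & c < mean_min t.
Proof.
move=> D0_null cl; have [n mn] := cvge_gt_exists (mean_min_cvgy D0_null) cl.
by exists (n.+1%:R)%R.
Qed.

Section finite_mean_min.
Hypothesis fin : \int[mu]_w mine (B w) (D w) < +oo.

Lemma mean_min_fin_num (t : R) : (0 < t)%R -> mean_min t \is a fin_num.
Proof.
move=> t0; have t0' := ltW t0.
have fin1 : mean_min 1 < +oo by rewrite /mean_min; under eq_integral do rewrite mul1e.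
rewrite ge0_fin_numE ?mean_min_ge0 //.
have [t1|t1] := leP t 1%R; first exact: le_lt_trans (mean_min_nd t0' t1) fin1.
have := mean_min_ratio ltr01 (ltW t1); rewrite mul1e => /le_lt_trans; apply.
by rewrite lte_mul_pinfty.
Qed.

Lemma mean_min_cvg0 :
  mean_min n.+1%:R^-1 @[n --> \oo] --> \int[mu]_w (if D w == +oo then B w else 0).
Proof.
have min_cvg w : mine (B w) ((n.+1%:R^-1)%:E * D w) @[n --> \oo] -->
    (if D w == +oo then B w else 0) by exact: cvg_mine_scale0.
have mlim : measurable_fun setT (fun w => if D w == +oo then B w else 0).
  by apply: (emeasurable_fun_cvg _ _ (fun n => measurable_mine_scale n.+1%:R^-1)).
have integrable_min : mu.-integrable setT (fun w => mine (B w) (D w)).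
  apply/integrableP; split; first exact/measurable_mine.
  by under eq_integral do rewrite gee0_abs ?le_min ?B0 ?D0 //.
have dominated w n : setT w ->
    `|mine (B w) ((n.+1%:R^-1)%:E * D w)| <= mine (B w) (D w).
  move=> _; rewrite gee0_abs ?mine_scale_nneg ?invr_ge0 //.
  have := @mine_scale_nd _ (B w) _ (D0 w) n.+1%:R^-1 1.
  by rewrite mul1e; apply; rewrite invf_le1 // ler1n.
by case: (dominated_convergence measurableT (fun n => measurable_mine_scale n.+1%:R^-1)
  mlim (aeW _ (fun w _ => min_cvg w)) integrable_min (aeW _ dominated)).
Qed.

Lemma mean_min_lt_near0 (c : \bar R) :
  \int[mu]_w (if D w == +oo then B w else 0) < c ->
  exists2 t, (0 < t)%R & mean_min t < c.
Proof.
move=> lc; have [n mn] := cvge_lt_exists mean_min_cvg0 lc.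
by exists (n.+1%:R^-1)%R; rewrite ?invr_gt0.
Qed.

Lemma mean_min_level_unique (c : R) :
  (exists2 t0, (0 < t0)%R & mean_min t0 < c%:E) ->
  (exists2 t1, (0 < t1)%R & c%:E < mean_min t1) ->
  exists! t, (0 < t)%R /\ mean_min t = c%:E.
Proof.
move=> [t0 t00 m0] [t1 t10 m1].
pose k t := fine (mean_min t).
have kE t : (0 < t)%R -> mean_min t = (k t)%:E.
  by move=> t_gt0; rewrite fineK ?mean_min_fin_num.
have k_nd t s : (0 < t)%R -> (t <= s)%R -> (k t <= k s)%R.
  move=> t_gt0 ts; rewrite -lee_fin -!kE ?(lt_le_trans t_gt0 ts) //.
  exact: mean_min_nd (ltW t_gt0) ts.
have k_ratio t s : (0 < t)%R -> (t <= s)%R -> (t * k s <= s * k t)%R.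
  move=> t_gt0 ts; rewrite -lee_fin !EFinM -!kE ?(lt_le_trans t_gt0 ts) //.
  exact: mean_min_ratio.
have k_concave a b c' : (0 < a)%R -> (a <= b)%R -> (b <= c')%R ->
    ((b - a) * k c' + (c' - b) * k a <= (c' - a) * k b)%R.
  move=> a0 ab bc; have b0 := lt_le_trans a0 ab; have c0 := lt_le_trans b0 bc.
  by rewrite -lee_fin EFinD !EFinM -!kE //; exact: mean_min_concave.
have kt0 : (k t0 <= c)%R by rewrite -lee_fin -kE // ltW.
have kt1 : (c < k t1)%R by rewrite -lte_fin -kE.
have [t [[t_gt0 kt] t_uniq]] :=
  concave_nd_level_unique k_nd k_ratio k_concave t00 t10 kt0 kt1.
exists t; split; first by rewrite kE // kt.
by move=> s [s0 ms]; apply: t_uniq; rewrite /k ms.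
Qed.

Lemma fixed_point_mean_min (lambda z : R) : (0 < lambda)%R -> (0 < z)%R ->
  z%:E = lambda%:E * \int[mu]_w mine (z%:E * B w) (D w) <->
  mean_min z^-1 = lambda^-1%:E.
Proof.
move=> lam0 z0; have zV0 : (0 < z^-1)%R by rewrite invr_gt0.
rewrite integral_mine_scaleB // -(fineK (mean_min_fin_num zV0)) -!EFinM.
split => [[h]|[->]]; last by rewrite mulrCA mulfV ?gt_eqF // mulr1.
congr EFin; apply: (mulfI (lt0r_neq0 lam0)); rewrite mulfV ?gt_eqF //.
by apply: (mulfI (lt0r_neq0 z0)); rewrite mulr1 mulrCA -h.
Qed.

End finite_mean_min.

End mean_min.

Unset Implicit Arguments.
Theorem mainTheorem7 (d : measure_display) (T : measurableType d) (R : realType)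
  (P : probability T R) (B D : T -> \bar R) (lambda : R) :
  (0 < lambda)%R ->
  admissible_pair P B D ->
  lambda%:E * \int[P]_w (if D w == +oo then B w else 0) < 1 ->
  \int[P]_w mine (B w) (D w) < +oo ->
  1 < lambda%:E * \int[P]_w B w ->
  exists! z : R, (0 < z)%R /\
    z%:E = lambda%:E * \int[P]_w mine (z%:E * B w) (D w).
Proof.
move=> lam0 [mB [mD [B0 [D0 [_ [D0_null _]]]]]] mass_at_infty fin rho_gt1.
have [t [[t_gt0 mt] t_uniq]] :
    exists! t, (0 < t)%R /\ mean_min P B D t = lambda^-1%:E.
  apply: mean_min_level_unique => //.
    apply: mean_min_lt_near0 => //.
    by rewrite -[lambda^-1%:E]mule1 lte_pdivlMl.
  apply: mean_min_gt_neary => //.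
  by rewrite -[lambda^-1%:E]mule1 lte_pdivrMl.
exists t^-1%R; split.
  by split; [rewrite invr_gt0 | apply/fixed_point_mean_min; rewrite ?invrK ?invr_gt0].
move=> z [z0 /(fixed_point_mean_min mB mD B0 D0 fin lam0 z0) mz].
by rewrite -[z]invrK (t_uniq z^-1%R) // invr_gt0.
Qed.
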